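(* Let $L$ be a $\kappa$-frame and $a\in L$. Then $\mathfrak{D}_L\vee\nabla_a=\partial_{(\downarrow a)^{**}}$ in $\mathbb{C}L$.
   Context: $\kappa$ is a fixed regular cardinal; a $\kappa$-frame is a bounded distributive lattice having joins of all subsets of cardinality $<\kappa$ and satisfying the frame distributive law for such joins. A $\kappa$-ideal is a downset in which every subset of cardinality $<\kappa$ has an upper bound; $\mathfrak{H}_\kappa L$ is the frame of $\kappa$-ideals under inclusion, $\downarrow a=\{x\mid x\le a\}$, and $J^*$ denotes the pseudocomplement in $\mathfrak{H}_\kappa L$ (the largest $\kappa$-ideal $K$ with $K\cap J=\{0\}$), so $(\downarrow a)^{**}=((\downarrow a)^* )^*$. A congruence is an equivalence relation that is a sub-$\kappa$-frame of $L\times L$; $\mathbb{C}L$ is the frame of congruences under inclusion. $\nabla_a=\{(x,y)\mid x\vee a=y\vee a\}$; $\mathfrak{D}_L=\{(b,c)\mid\forall x\in L:\ b\wedge x=0\iff c\wedge x=0\}$; for a $\kappa$-ideal $I$, $\partial_I=\{(b,c)\mid\forall x\in L:\ b\wedge x\in I\iff c\wedge x\in I\}$. *)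

From Stdlib Require Import Classical.

Set Implicit Arguments.

(** |A| < |K| : there is no injection of K into A. (With classical logic and
    choice this is exactly the strict cardinal inequality.) *)
Definition card_lt {T : Type} (A : T -> Prop) (K : Type) : Prop :=
  ~ exists f : K -> T, (forall k1 k2, f k1 = f k2 -> k1 = k2) /\ forall k, A (f k).

(** A regular cardinal kappa, represented by a type of cardinality kappa:
    infinite, and a union of fewer than kappa sets, each of size < kappa,
    has size < kappa. *)
Record regular_cardinal := {
  rc_type :> Type;
  rc_infinite : exists f : nat -> rc_type, forall m n, f m = f n -> m = n;
  rc_regular : forall (I T : Type) (F : I -> T -> Prop),
      card_lt (fun _ : I => True) rc_type ->
      (forall i, card_lt (F i) rc_type) ->
      card_lt (fun x => exists i, F i x) rc_type }.

Definition small (k : regular_cardinal) {T : Type} (A : T -> Prop) : Prop :=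
  card_lt A (rc_type k).

(** A kappa-frame: a partial order with binary meets, a top, and joins
    [kf_sup S] of all subsets S of cardinality < kappa (the value of
    [kf_sup] on larger subsets is irrelevant), satisfying the frame law. *)
Record kappa_frame (k : regular_cardinal) := {
  kf_car :> Type;
  kf_le : kf_car -> kf_car -> Prop;
  kf_meet : kf_car -> kf_car -> kf_car;
  kf_top : kf_car;
  kf_sup : (kf_car -> Prop) -> kf_car;
  kf_refl : forall a, kf_le a a;
  kf_trans : forall a b c, kf_le a b -> kf_le b c -> kf_le a c;
  kf_antisym : forall a b, kf_le a b -> kf_le b a -> a = b;
  kf_meet_glb : forall a b c, kf_le c (kf_meet a b) <-> (kf_le c a /\ kf_le c b);
  kf_top_max : forall a, kf_le a kf_top;
  kf_sup_ub : forall S, small k S -> forall s, S s -> kf_le s (kf_sup S);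
  kf_sup_least : forall S, small k S ->
      forall u, (forall s, S s -> kf_le s u) -> kf_le (kf_sup S) u;
  kf_frame : forall a S, small k S ->
      kf_meet a (kf_sup S) = kf_sup (fun x => exists s, S s /\ x = kf_meet a s) }.

Section KFrame.
Variables (k : regular_cardinal) (L : kappa_frame k).

Definition kbot : L := kf_sup L (fun _ => False).
Definition kjoin (a b : L) : L := kf_sup L (fun x => x = a \/ x = b).

Definition kideal (I : L -> Prop) : Prop :=
  (forall x y, kf_le L x y -> I y -> I x) /\
  (forall S : L -> Prop, small k S -> (forall s, S s -> I s) ->
     exists u, I u /\ forall s, S s -> kf_le L s u).

Definition downset (a : L) : L -> Prop := fun x => kf_le L x a.

(** J^* : the largest kappa-ideal K with K ∩ J = {0}, i.e. the union of
    all such kappa-ideals. *)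
Definition pcomp (J : L -> Prop) : L -> Prop :=
  fun x => exists K, kideal K /\ (forall y, K y -> J y -> y = kbot) /\ K x.

(** congruences: equivalence relations that are sub-kappa-frames of L×L *)
Definition congruence (C : L -> L -> Prop) : Prop :=
  (forall x, C x x) /\
  (forall x y, C x y -> C y x) /\
  (forall x y z, C x y -> C y z -> C x z) /\
  C (kf_top L) (kf_top L) /\
  (forall x y x' y', C x y -> C x' y' -> C (kf_meet L x x') (kf_meet L y y')) /\
  (forall S : L * L -> Prop, small k S -> (forall p, S p -> C (fst p) (snd p)) ->
     C (kf_sup L (fun x => exists p, S p /\ x = fst p))
       (kf_sup L (fun y => exists p, S p /\ y = snd p))).

(** binary join in the frame CL of congruences (meets are intersections) *)
Definition cong_join (R S : L -> L -> Prop) : L -> L -> Prop :=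
  fun x y => forall C, congruence C ->
    (forall u v, R u v -> C u v) -> (forall u v, S u v -> C u v) -> C x y.

Definition nabla (a : L) : L -> L -> Prop :=
  fun x y => kjoin x a = kjoin y a.

Definition frakD : L -> L -> Prop :=
  fun b c => forall x, kf_meet L b x = kbot <-> kf_meet L c x = kbot.

Definition partialI (I : L -> Prop) : L -> L -> Prop :=
  fun b c => forall x, I (kf_meet L b x) <-> I (kf_meet L c x).

End KFrame.

(* (↓a)^* consists of the elements disjoint from a, so (b, c) lies in
   ∂_{(↓a)^{**}} exactly when b and c are disjoint from the same elements x
   with x ∧ a = 0.  This relation is a congruence containing 𝔇_L and ∇_a.
   Conversely, if d ≤ b are so related, then (b, b ∧ (d ∨ a)) ∈ 𝔇_L and
   (d, d ∨ a) ∈ ∇_a; meeting the latter pair with b yields (d, b) in every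
   congruence containing 𝔇_L and ∇_a.  The general case reduces to this one
   through b ∧ c. *)
From Stdlib Require Import Setoid ClassicalEpsilon.

Section FrameCongruences.
Variables (k : regular_cardinal) (L : kappa_frame k).
Notation le := (kf_le L).
Notation meet := (kf_meet L).
Notation bot := (kbot L).
Notation join := (kjoin L).

Lemma small_empty (T : Type) : small k (fun _ : T => False).
Proof.
  intros [g [_ Hg]]. destruct (rc_infinite k) as [f _]. exact (Hg (f 0)).
Qed.

Lemma small_pair (T : Type) (a b : T) : small k (fun x => x = a \/ x = b).
Proof.
  intros [g [g_inj Hg]]. destruct (rc_infinite k) as [f f_inj].
  destruct (Hg (f 0)) as [e0|e0]; destruct (Hg (f 1)) as [e1|e1];
  destruct (Hg (f 2)) as [e2|e2];
  first
  [ assert (E : f 0 = f 1) by (apply g_inj; congruence)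
  | assert (E : f 0 = f 2) by (apply g_inj; congruence)
  | assert (E : f 1 = f 2) by (apply g_inj; congruence) ];
  apply f_inj in E; discriminate.
Qed.

Lemma small_image (T U : Type) (S : T -> Prop) (f : T -> U) :
  small k S -> small k (fun u => exists t, S t /\ u = f t).
Proof.
  intros HS [g [g_inj Hg]]. apply HS.
  exists (fun i => proj1_sig (constructive_indefinite_description _ (Hg i))).
  split.
  - intros i j E. apply g_inj.
    destruct (constructive_indefinite_description _ (Hg i)) as [t1 [S1 E1]].
    destruct (constructive_indefinite_description _ (Hg j)) as [t2 [S2 E2]].
    simpl in E. subst t2. congruence.
  - intro i. destruct (constructive_indefinite_description _ (Hg i)) as [t [St Et]].
    exact St.
Qed.

Lemma meet_le_l a b : le (meet a b) a.
Proof. exact (proj1 (proj1 (kf_meet_glb L a b (meet a b)) (kf_refl L _))). Qed.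

Lemma meet_le_r a b : le (meet a b) b.
Proof. exact (proj2 (proj1 (kf_meet_glb L a b (meet a b)) (kf_refl L _))). Qed.

Lemma meet_glb a b c : le c a -> le c b -> le c (meet a b).
Proof. intros; apply (kf_meet_glb L); auto. Qed.

Hint Resolve meet_le_l meet_le_r kf_refl : frame.

Lemma meet_mono a b c d : le a b -> le c d -> le (meet a c) (meet b d).
Proof. intros; apply meet_glb; eauto using kf_trans with frame. Qed.

Lemma meet_comm a b : meet a b = meet b a.
Proof. apply kf_antisym; apply meet_glb; auto with frame. Qed.

Lemma meet_assoc a b c : meet (meet a b) c = meet a (meet b c).
Proof. apply kf_antisym; repeat apply meet_glb; eauto using kf_trans with frame. Qed.

Lemma meet_swap a b c : meet a (meet b c) = meet b (meet a c).
Proof. rewrite <- !meet_assoc, (meet_comm a b). reflexivity. Qed.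

Lemma meet_idem a : meet a a = a.
Proof. apply kf_antisym; [|apply meet_glb]; auto with frame. Qed.

Lemma meet_absorb_le a b : le a b -> meet b a = a.
Proof. intros; apply kf_antisym; [|apply meet_glb]; auto with frame. Qed.

Lemma bot_le x : le bot x.
Proof. apply kf_sup_least; [apply small_empty | intros s []]. Qed.

Lemma le_eq_bot x y : le x y -> y = bot -> x = bot.
Proof. intros Hxy ->. apply kf_antisym; [exact Hxy | apply bot_le]. Qed.

Lemma meet_bot_l y : meet bot y = bot.
Proof. apply (le_eq_bot _ bot); auto with frame. Qed.

Lemma disjoint_le x y z : le x y -> meet y z = bot -> meet x z = bot.
Proof. intros; apply (le_eq_bot _ (meet y z)); auto using meet_mono with frame. Qed.

Lemma sup_eq_bot T : small k T -> (forall t, T t -> t = bot) -> kf_sup L T = bot.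
Proof.
  intros HT H. apply (le_eq_bot _ bot); auto. apply kf_sup_least; auto.
  intros s Hs. rewrite (H s Hs). apply kf_refl.
Qed.

Lemma sup_disjoint_iff T x : small k T ->
  (meet (kf_sup L T) x = bot <-> forall t, T t -> meet t x = bot).
Proof.
  intros HT. split.
  - intros H t Ht. apply (disjoint_le _ (kf_sup L T)); auto. apply kf_sup_ub; auto.
  - intros H. rewrite meet_comm, kf_frame by exact HT.
    apply sup_eq_bot; [apply small_image; exact HT|].
    intros t [s [Hs ->]]. rewrite meet_comm. auto.
Qed.

Lemma join_le_l x y : le x (join x y).
Proof. apply kf_sup_ub; [apply small_pair | left; reflexivity]. Qed.

Lemma join_le_r x y : le y (join x y).
Proof. apply kf_sup_ub; [apply small_pair | right; reflexivity]. Qed.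

Lemma join_least x y u : le x u -> le y u -> le (join x y) u.
Proof. intros; apply kf_sup_least; [apply small_pair | intros s [-> | ->]; auto]. Qed.

Lemma join_disjoint b c x :
  meet b x = bot -> meet c x = bot -> meet (join b c) x = bot.
Proof.
  intros Hb Hc. apply sup_disjoint_iff; [apply small_pair|].
  intros t [-> | ->]; assumption.
Qed.

Definition down_closed (J : L -> Prop) : Prop :=
  forall x y, le x y -> J y -> J x.

Lemma pcomp_down_closed J : down_closed (pcomp L J).
Proof.
  intros x y Hxy [K [[K_down K_sup] [KJ Ky]]].
  exists K. repeat split; eauto.
Qed.

(* The union defining J^* is attained by the annihilator of J, itself a κ-ideal. *)
Lemma pcomp_iff J z : down_closed J ->
  pcomp L J z <-> forall y, J y -> meet z y = bot.
Proof.
  intros HJ. split.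
  - intros [K [[K_down _] [KJ Kz]]] y Jy.
    apply KJ; [apply (K_down _ z) | apply (HJ _ y)]; auto with frame.
  - intros H. exists (fun x => forall y, J y -> meet x y = bot).
    repeat split.
    + intros x x' Hle Hx' y Jy. apply (disjoint_le _ x'); auto.
    + intros S HS HSJ. exists (kf_sup L S). split.
      * intros y Jy. apply sup_disjoint_iff; auto.
      * intros s Hs. apply kf_sup_ub; auto.
    + intros y Hy Jy. rewrite <- (meet_idem y). auto.
    + exact H.
Qed.

Lemma pcomp_downset_iff a y : pcomp L (downset L a) y <-> meet y a = bot.
Proof.
  rewrite pcomp_iff by (intros x y' Hxy Hy; eapply kf_trans; eauto).
  split; intros H.
  - apply H. apply kf_refl.
  - intros w Hw. rewrite meet_comm. apply (disjoint_le _ a); auto.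
    rewrite meet_comm. exact H.
Qed.

Lemma pcomp2_downset_iff a z : pcomp L (pcomp L (downset L a)) z <->
  forall y, meet y a = bot -> meet z y = bot.
Proof.
  rewrite pcomp_iff by apply pcomp_down_closed.
  split; intros H y Hy; apply H; apply pcomp_downset_iff; exact Hy.
Qed.

Lemma pcomp2_downset_disjoint a z : meet z a = bot ->
  pcomp L (pcomp L (downset L a)) z <-> z = bot.
Proof.
  intros Hz. rewrite pcomp2_downset_iff. split.
  - intros H. rewrite <- (meet_idem z). auto.
  - intros -> y _. apply meet_bot_l.
Qed.

Definition disj_equiv (a b c : L) : Prop :=
  forall x, meet x a = bot -> (meet b x = bot <-> meet c x = bot).

Lemma partialI_pcomp2_downset_iff a b c :
  partialI L (pcomp L (pcomp L (downset L a))) b c <-> disj_equiv a b c.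
Proof.
  split.
  - intros H x Hx.
    assert (Hdisj : forall d, meet (meet d x) a = bot)
      by (intro d; apply (disjoint_le _ x); auto with frame).
    rewrite <- (pcomp2_downset_disjoint a (meet b x)), <- (pcomp2_downset_disjoint a (meet c x))
      by apply Hdisj.
    apply H.
  - intros H z. rewrite !pcomp2_downset_iff.
    split; intros G w Hw; rewrite meet_assoc;
      assert (Hzw : meet (meet z w) a = bot)
        by (apply (disjoint_le _ w); auto with frame);
      apply (H _ Hzw); rewrite <- meet_assoc; auto.
Qed.

Lemma disj_equiv_congruence a : congruence L (disj_equiv a).
Proof.
  split; [|split; [|split; [|split; [|split]]]].
  - intros x y Hy; tauto.
  - intros x y H z Hz; specialize (H z Hz); tauto.
  - intros x y z H1 H2 w Hw; specialize (H1 w Hw); specialize (H2 w Hw); tauto.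
  - intros x _; tauto.
  - intros b c b' c' H H' x Hx. rewrite !meet_assoc.
    assert (Hb'x : meet (meet b' x) a = bot) by (apply (disjoint_le _ x); auto with frame).
    assert (Hcx : meet (meet c x) a = bot) by (apply (disjoint_le _ x); auto with frame).
    rewrite (H _ Hb'x), (meet_swap c b' x), (meet_swap c c' x).
    apply H'; exact Hcx.
  - intros S HS H x Hx.
    rewrite !sup_disjoint_iff by (apply small_image; exact HS).
    split; intros G t [p [Sp ->]];
      [apply (proj1 (H p Sp x Hx)) | apply (proj2 (H p Sp x Hx))]; eauto.
Qed.

Lemma frakD_disj_equiv a b c : frakD L b c -> disj_equiv a b c.
Proof. intros H x _; apply H. Qed.

Lemma nabla_disjoint a b c x : nabla L a b c -> meet x a = bot ->
  meet b x = bot -> meet c x = bot.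
Proof.
  intros E Hx Hb. apply (disjoint_le _ (join c a)); [apply join_le_l|].
  unfold nabla in E. rewrite <- E.
  apply join_disjoint; [exact Hb | rewrite meet_comm; exact Hx].
Qed.

Lemma nabla_disj_equiv a b c : nabla L a b c -> disj_equiv a b c.
Proof.
  intros H x Hx. split; apply (nabla_disjoint a); auto. symmetry; exact H.
Qed.

Lemma cong_join_disj_equiv a x y :
  cong_join L (frakD L) (nabla L a) x y -> disj_equiv a x y.
Proof.
  intros H. apply H;
    [apply disj_equiv_congruence | apply frakD_disj_equiv | apply nabla_disj_equiv].
Qed.

Lemma disj_equiv_meet a b c : disj_equiv a b c -> disj_equiv a b (meet b c).
Proof.
  intros H x Hx. split.
  - intros Hb. apply (disjoint_le _ b); auto with frame.
  - intros Hbc. rewrite <- (meet_idem b), meet_assoc.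
    assert (Hbx : meet (meet b x) a = bot) by (apply (disjoint_le _ x); auto with frame).
    apply (H _ Hbx). rewrite <- meet_assoc, (meet_comm c b). exact Hbc.
Qed.

Lemma frakD_meet_join a b d : le d b -> disj_equiv a b d ->
  frakD L b (meet b (join d a)).
Proof.
  intros Hdb H x. split.
  - apply disjoint_le; auto with frame.
  - intros Hx. set (y := meet b x).
    assert (Hya : meet y a = bot).
    { apply le_eq_bot with (2 := Hx). apply meet_glb; [apply meet_glb|].
      - unfold y; eauto using kf_trans with frame.
      - eapply kf_trans; [apply meet_le_r | apply join_le_r].
      - unfold y; eauto using kf_trans with frame. }
    assert (Hdy : meet d y = bot).
    { apply le_eq_bot with (2 := Hx). apply meet_glb; [apply meet_glb|].
      - eapply kf_trans; [apply meet_le_l | exact Hdb].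
      - eapply kf_trans; [apply meet_le_l | apply join_le_l].
      - unfold y; eauto using kf_trans with frame. }
    apply (proj2 (H y Hya)) in Hdy. unfold y in Hdy.
    rewrite <- meet_assoc, meet_idem in Hdy. exact Hdy.
Qed.

Lemma nabla_join a d : nabla L a d (join d a).
Proof.
  unfold nabla. apply kf_antisym.
  - apply join_least; [eapply kf_trans; apply join_le_l | apply join_le_r].
  - apply join_least; [apply kf_refl | apply join_le_r].
Qed.

Section GeneratedCongruence.
Context {a : L} {C : L -> L -> Prop}.
Hypotheses (HC : congruence L C)
  (frakD_C : forall u v, frakD L u v -> C u v)
  (nabla_C : forall u v, nabla L a u v -> C u v).

Lemma disj_equiv_le_cong b d : le d b -> disj_equiv a b d -> C b d.
Proof.
  intros Hdb H. destruct HC as [C_refl [C_sym [C_trans [_ [C_meet _]]]]].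
  assert (Hbd : C (meet b d) (meet b (join d a)))
    by (apply C_meet; [apply C_refl | apply nabla_C, nabla_join]).
  rewrite meet_absorb_le in Hbd by exact Hdb.
  apply (C_trans _ (meet b (join d a))); [apply frakD_C, frakD_meet_join; auto|].
  apply C_sym; exact Hbd.
Qed.

Lemma disj_equiv_cong x y : disj_equiv a x y -> C x y.
Proof.
  intros H. destruct (disj_equiv_congruence a) as [_ [equiv_sym _]].
  destruct HC as [_ [C_sym [C_trans _]]].
  apply (C_trans _ (meet x y)).
  - apply disj_equiv_le_cong; [apply meet_le_l | apply disj_equiv_meet; exact H].
  - apply C_sym. rewrite meet_comm.
    apply disj_equiv_le_cong; [apply meet_le_l | apply disj_equiv_meet, equiv_sym, H].
Qed.

End GeneratedCongruence.

End FrameCongruences.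

Theorem mainTheorem18 (k : regular_cardinal) (L : kappa_frame k) (a : L) :
  forall x y : L,
    cong_join L (frakD L) (nabla L a) x y <->
    partialI L (pcomp L (pcomp L (downset L a))) x y.
Proof.
  intros x y. rewrite partialI_pcomp2_downset_iff. split.
  - apply cong_join_disj_equiv.
  - intros H C HC frakD_C nabla_C. exact (disj_equiv_cong k L HC frakD_C nabla_C _ _ H).
Qed.
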